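(* Let $\gamma:K^*\to K$ be a non-degenerate simplicial dynamical system on a polyhedron $X=X(K)$ of positive dimension $d$. For $s^*\in K^*$ let $\bar g_{s^*}:\gamma(s^* )\to s^*$ be the affine isomorphism inverse to the restriction to $s^*$ of the p.l. map $g$ associated with $\gamma$. Then for all $x_1,x_2$ in the simplex $\gamma(s^* )$, $$d_K(\bar g_{s^*}(x_1),\bar g_{s^*}(x_2))\le\left(1-\frac{\theta(K^*,K)}{d}\right)d_K(x_1,x_2).$$
   Context: $K$ is a simplicial complex with vertex set $V(K)$; each $x\in X(K)$ has barycentric coordinates $b_v(x)\ge0$, $v\in V(K)$, summing to $1$, with $x=\sum_vb_v(x)v$ and $\{v:b_v(x)>0\}$ spanning a simplex of $K$. The metric $d_K(x,y)=\sum_{v\in V(K)}|b_v(x)-b_v(y)|$. A subdivision $K^*$ of $K$ is a triangulation of the same polyhedron in which every simplex of $K$ is a union of simplices of $K^*$; it is proper if no simplex of $K^*$ meets two disjoint simplices of $K$. A simplicial dynamical system is a simplicial map $\gamma:K^*\to K$ (vertex map sending vertex sets of simplices onto vertex sets of simplices) with $K^*$ a proper subdivision of $K$; it is non-degenerate if $\dim\gamma(s^* )=\dim s^*$ for all $s^*\in K^*$ (i.e. $\gamma$ is injective on the vertices of each simplex). The associated p.l. map is $g(x)=\sum_{v\in V(K^* )}b^*_v(x)\gamma(v)$ with $b^*$ the $K^*$ barycentric coordinates. $\theta(K^*,K)=\min\{b_v(v^* ):v^*\in V(K^* ),v\in V(K),b_v(v^* )>0\}$. The dimension $d$ of $X$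 is the maximal dimension of a simplex of $K$. *)

From HB Require Import structures.
From mathcomp Require Import all_boot all_order all_algebra.
Set Implicit Arguments. Unset Strict Implicit. Unset Printing Implicit Defensive.
Import Order.TTheory GRing.Theory Num.Theory.
Local Open Scope ring_scope.

Definition supp (R : numDomainType) (T : finType) (f : T -> R) : {set T} :=
  [set t | f t != 0].

Definition is_complex (T : finType) (K : {set {set T}}) : Prop :=
  (forall s, s \in K -> s != set0) /\
  (forall s s' : {set T}, s \in K -> s' \subset s -> s' != set0 -> s' \in K) /\
  (forall v : T, [set v] \in K).

Definition bary (R : numDomainType) (T : finType) (S : {set T}) (f : T -> R) : Prop :=
  (forall t, 0 <= f t) /\ \sum_t f t = 1 /\ supp f \subset S.

(* x is (the barycentric coordinate vector of) a point of X(K) *)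
Definition inX (R : numDomainType) (T : finType) (K : {set {set T}}) (x : T -> R) : Prop :=
  (forall t, 0 <= x t) /\ \sum_t x t = 1 /\ supp x \in K.

Definition dK (R : numDomainType) (V : finType) (x y : V -> R) : R :=
  \sum_v `|x v - y v|.

(* the point of X(K) with K*-barycentric coordinates c; the vertex w of K*
   is the point of X(K) with K-barycentric coordinates p w *)
Definition realize (R : numDomainType) (V W : finType) (p : W -> V -> R) (c : W -> R)
  : V -> R := fun v => \sum_w c w * p w v.

Definition is_subdivision (R : numDomainType) (V W : finType)
  (K : {set {set V}}) (Ks : {set {set W}}) (p : W -> V -> R) : Prop :=
  [/\ is_complex K /\ is_complex Ks,
      (forall c, inX Ks c -> inX K (realize p c)),
      (forall x, inX K x -> exists c, inX Ks c /\ realize p c =1 x),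
      (forall c1 c2, inX Ks c1 -> inX Ks c2 -> realize p c1 =1 realize p c2 -> c1 =1 c2)
    &
      (forall s, s \in K -> exists T : {set {set W}}, T \subset Ks /\
         forall x : V -> R, bary s x <->
           (exists t, t \in T /\ exists c, bary t c /\ realize p c =1 x))].

Definition proper_subdivision (R : numDomainType) (V W : finType)
  (K : {set {set V}}) (Ks : {set {set W}}) (p : W -> V -> R) : Prop :=
  forall t s1 s2, t \in Ks -> s1 \in K -> s2 \in K -> [disjoint s1 & s2] ->
    ~ ((exists c, bary t c /\ bary s1 (realize p c)) /\
       (exists c, bary t c /\ bary s2 (realize p c))).

Definition simplicial (V W : finType) (Ks : {set {set W}}) (K : {set {set V}})
  (gam : W -> V) : Prop := forall t, t \in Ks -> gam @: t \in K.

Definition nondegenerate_map (V W : finType) (Ks : {set {set W}}) (gam : W -> V) : Prop :=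
  forall t, t \in Ks -> #|gam @: t| = #|t|.

(* K-barycentric coordinates of g(x) where x has K*-coordinates c:
   g(x) = sum_w c_w gam(w) *)
Definition gimage (R : numDomainType) (V W : finType) (gam : W -> V) (c : W -> R)
  : V -> R := fun v => \sum_(w | gam w == v) c w.

(* theta(K*,K) = min { b_v(w) : w vertex of K*, v vertex of K, b_v(w) > 0 };
   the initial value 1 is harmless since all such b_v(w) are <= 1 *)
Definition theta (R : realFieldType) (V W : finType) (p : W -> V -> R) : R :=
  \big[Num.min/1]_(w : W) \big[Num.min/1]_(v : V | 0 < p w v) p w v.

Definition dimK (V : finType) (K : {set {set V}}) : nat :=
  (\max_(s in K) #|s|).-1.

From HB Require Import structures.
From mathcomp Require Import all_boot all_order all_algebra.
From mathcomp Require Import ring lra.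
Set Implicit Arguments. Unset Strict Implicit. Unset Printing Implicit Defensive.
Import Order.TTheory GRing.Theory Num.Theory.
Local Open Scope ring_scope.

(* Let [x = c1 - c2] be the difference of the K*-coordinates of the two
   preimages: it lives on the vertices of s*, sums to 0, and, gamma being
   injective on s*, [d_K(y1, y2) = sum_w |x w|].  The preimages differ by
   [sum_w x w * p w] and the rows of [p] are probability vectors, so their
   distance is at most [sum_w |x w|].  To gain the factor, take vertices [wM]
   and [wm] of s* where [x] is maximal and minimal.  As [x] sums to 0 over at
   most d + 1 vertices, [x wM] and [- x wm] are at least [sum_w |x w| / 2d];
   by properness [wM] and [wm] share a K-vertex [v0], where their
   contributions, of opposite signs and each at least [theta] times that
   bound, cancel. *)

Lemma normrD_le_cancel (R : realFieldType) (u v e : R) :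
  e <= u -> e <= - v -> `|u + v| <= `|u| + `|v| - 2 * e.
Proof.
move=> eu ev; have := ler_norm u; have := ler_norm (- v); rewrite normrN.
by case: (lerP 0 (u + v)) => [/ger0_norm | /ltr0_norm] ->; lra.
Qed.

Lemma normr_sum_le_cancel (R : realFieldType) (I : finType) (x : I -> R) a b e :
  e <= x a -> e <= - x b -> `|\sum_i x i| <= \sum_i `|x i| - 2 * e.
Proof.
move=> ea eb; have [eq_ba | neq_ba] := eqVneq b a.
  by rewrite eq_ba in eb; have := ler_norm_sum (index_enum I) x predT; lra.
rewrite (bigD1 a) // (bigD1 b) //= [X in _ <= X - _](bigD1 a) //.
rewrite [X in _ <= _ + X - _](bigD1 b) //= addrA.
set r := \sum_(i | _) x i.
have := ler_norm_sum (index_enum I) x (fun i => (i != a) && (i != b)); rewrite -/r.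
have := normrD_le_cancel ea eb; have := ler_normD (x a + x b) r; lra.
Qed.

Section Mixing.

Variables (R : realFieldType) (V W : finType) (p : W -> V -> R).
Hypothesis p_ge0 : forall w v, 0 <= p w v.
Hypothesis p_row1 : forall w, \sum_v p w v = 1.

Lemma l1_norm_mix_le (x : W -> R) a b v0 e :
  e <= x a * p a v0 -> e <= - (x b * p b v0) ->
  \sum_v `|\sum_w x w * p w v| <= \sum_w `|x w| - 2 * e.
Proof.
move=> ea eb.
have -> : \sum_w `|x w| = \sum_v \sum_w `|x w * p w v|.
  rewrite exchange_big; apply: eq_bigr => w _.
  under eq_bigr do rewrite normrM (ger0_norm (p_ge0 _ _)).
  by rewrite -mulr_sumr p_row1 mulr1.
rewrite (bigD1 v0) // [X in _ <= X - _](bigD1 v0) //=.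
have := normr_sum_le_cancel (x := fun w => x w * p w v0) ea eb.
have : \sum_(v | v != v0) `|\sum_w x w * p w v|
       <= \sum_(v | v != v0) \sum_w `|x w * p w v|.
  by apply: ler_sum => v _; apply: ler_norm_sum.
lra.
Qed.

Lemma l1_norm_mix_contract (x : W -> R) a b v0 (m : nat) th :
  (0 < m)%N -> 0 < th -> th <= p a v0 -> th <= p b v0 ->
  \sum_w `|x w| <= 2 * m%:R * x a -> \sum_w `|x w| <= 2 * m%:R * - x b ->
  \sum_v `|\sum_w x w * p w v| <= (1 - th / m%:R) * \sum_w `|x w|.
Proof.
move=> m_gt0 th_gt0 th_a th_b Sa Sb; set S := \sum_w `|x w|.
have m2_gt0 : 0 < 2 * m%:R :> R by rewrite mulr_gt0 ?ltr0n.
have e_le z q : S <= 2 * m%:R * z -> th <= q -> th * (S / (2 * m%:R)) <= q * z.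
  move=> S_le th_q; apply: ler_pM => //; first exact: ltW.
    by apply: divr_ge0; [apply: sumr_ge0 | apply: ltW].
  by rewrite ler_pdivrMr // mulrC.
set e := th * (S / (2 * m%:R)).
apply: le_trans (l1_norm_mix_le (a := a) (b := b) (v0 := v0) (e := e) _ _) _.
- by rewrite [x a * _]mulrC; apply: e_le Sa th_a.
- by rewrite -mulNr [- x b * _]mulrC; apply: e_le Sb th_b.
- suff -> : S - 2 * e = (1 - th / m%:R) * S by [].
  by rewrite /e; field; rewrite pnatr_eq0 -lt0n.
Qed.

End Mixing.

Lemma dK_realize (R : realFieldType) (V W : finType) (p : W -> V -> R) c1 c2 :
  dK (realize p c1) (realize p c2) = \sum_v `|\sum_w (c1 w - c2 w) * p w v|.
Proof.
apply: eq_bigr => v _; rewrite /realize -sumrB.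
by under [in RHS]eq_bigr do rewrite mulrBl.
Qed.

Section Spread.

Variables (R : realFieldType) (W : finType) (t : {set W}).

Lemma argmin_le0 (x : W -> R) wm : \sum_(w in t) x w = 0 ->
  wm \in t -> {in t, forall w, x wm <= x w} -> x wm <= 0.
Proof.
move=> sum0 wmt hm; have t_gt0 : (0 < #|t|)%N by apply/card_gt0P; exists wm.
have : \sum_(w in t) x wm <= \sum_(w in t) x w by apply: ler_sum.
by rewrite sum0 sumr_const -mulr_natl pmulr_rle0 ?ltr0n.
Qed.

Lemma sum_normr_le_argmax (x : W -> R) wM wm m : \sum_(w in t) x w = 0 ->
  wM \in t -> wm \in t -> {in t, forall w, x w <= x wM} ->
  {in t, forall w, x wm <= x w} -> (#|t|.-1 <= m)%N ->
  \sum_(w in t) `|x w| <= 2 * m%:R * x wM.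
Proof.
move=> sum0 wMt wmt hM hm t_le_m.
have xm_le0 : x wm <= 0 := argmin_le0 sum0 wmt hm.
have xM_ge0 : 0 <= x wM.
  rewrite -oppr_le0; apply: (@argmin_le0 (fun w => - x w)) wMt _.
    by rewrite sumrN sum0 oppr0.
  by move=> w /hM; rewrite lerN2.
have xm_sum : - x wm = \sum_(w in t :\ wm) x w.
  by apply/eqP; rewrite eq_sym -addr_eq0 addrC -big_setD1 ?sum0.
rewrite (big_setD1 wm wmt) /= (ler0_norm xm_le0) xm_sum -big_split /=.
apply: (@le_trans _ _ (\sum_(w in t :\ wm) 2 * x wM)).
  apply: ler_sum => w /setD1P [_ wt]; have := hM w wt.
  by case: (lerP 0 (x w)) => [/ger0_norm | /ltr0_norm] ->; lra.
rewrite sumr_const; have -> : #|t :\ wm| = #|t|.-1 by rewrite (cardsD1 wm t) wmt.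
rewrite -[_ *+ _]mulr_natr mulrAC.
by apply: ler_wpM2r => //; apply: ler_wpM2l; rewrite ?ler_nat.
Qed.

Lemma sum_normr_le_extremes (x : W -> R) m : t != set0 ->
  \sum_(w in t) x w = 0 -> (#|t|.-1 <= m)%N ->
  exists wM wm, [/\ wM \in t, wm \in t,
    \sum_(w in t) `|x w| <= 2 * m%:R * x wM &
    \sum_(w in t) `|x w| <= 2 * m%:R * - x wm].
Proof.
case/set0Pn=> w0 w0t sum0 t_le_m.
have [wM wMt xM] := arg_maxP x w0t; have [wm wmt xm] := arg_minP x w0t.
exists wM, wm; split => //; first exact: sum_normr_le_argmax xM xm t_le_m.
rewrite -(eq_bigr _ (fun w _ => normrN (x w))).
apply: (sum_normr_le_argmax (wM := wm) (wm := wM)) => //.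
- by rewrite sumrN sum0 oppr0.
- by move=> w /xm; rewrite lerN2.
- by move=> w /xM; rewrite lerN2.
Qed.

End Spread.

Lemma theta_gt0 (R : realFieldType) (V W : finType) (p : W -> V -> R) :
  0 < theta p.
Proof.
apply: (big_ind (fun y => 0 < y)) => // [y z y_gt0 z_gt0 | w _].
  by rewrite lt_min y_gt0.
apply: (big_ind (fun y => 0 < y)) => // y z y_gt0 z_gt0.
by rewrite lt_min y_gt0.
Qed.

Lemma theta_le (R : realFieldType) (V W : finType) (p : W -> V -> R) w v :
  0 < p w v -> theta p <= p w v.
Proof. by move=> p_gt0; apply: le_trans (bigmin_le 1 w _) (bigmin_le_cond _ _ p_gt0). Qed.

Section Support.

Variables (R : numDomainType) (T : finType).

Lemma supp_sub_eq0 (S : {set T}) (f : T -> R) x :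
  supp f \subset S -> x \notin S -> f x = 0.
Proof.
move=> /subsetP fS xS; apply/eqP; apply: contraNT xS => fx0.
by apply: fS; rewrite inE.
Qed.

Lemma sum_supp_sub (S : {set T}) (f : T -> R) :
  supp f \subset S -> \sum_(x in S) f x = \sum_x f x.
Proof. by move=> fS; apply: big_rmcond => x; apply: supp_sub_eq0. Qed.

End Support.

Definition vertex_coord (R : numDomainType) (W : finType) (w : W) : W -> R :=
  fun w' => (w' == w)%:R.

Lemma supp_vertex_coord (R : numDomainType) (W : finType) (w : W) :
  supp (vertex_coord R w) = [set w].
Proof. by apply/setP => w'; rewrite !inE /vertex_coord pnatr_eq0 eqb0 negbK. Qed.

Lemma realize_vertex_coord (R : numDomainType) (V W : finType)
    (p : W -> V -> R) w : realize p (vertex_coord R w) =1 p w.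
Proof.
move=> v; rewrite /realize (bigD1 w) //= /vertex_coord eqxx mul1r big1 ?addr0 //.
by move=> w' /negbTE ->; rewrite mul0r.
Qed.

Lemma bary_vertex_coord (R : numDomainType) (W : finType) (t : {set W}) w :
  w \in t -> bary t (vertex_coord R w).
Proof.
move=> wt; split; first by move=> w'; rewrite ler0n.
split; last by rewrite supp_vertex_coord sub1set.
by rewrite (bigD1 w) //= /vertex_coord eqxx big1 ?addr0 // => w' /negbTE ->.
Qed.

Section Subdivision.

Variables (R : realFieldType) (V W : finType).
Variables (K : {set {set V}}) (Ks : {set {set W}}) (p : W -> V -> R).
Hypothesis subdiv : is_subdivision K Ks p.

Lemma subdivision_vertex_inX w : inX K (realize p (vertex_coord R w)).
Proof.
case: subdiv => [[_ [_ [_ vKs]]] realize_inX _ _ _]; apply: realize_inX.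
split; first by move=> w'; rewrite ler0n.
by split; [case: (bary_vertex_coord R (in_setT w)) => _ [] | rewrite supp_vertex_coord].
Qed.

Lemma subdivision_ge0 w v : 0 <= p w v.
Proof. by case: (subdivision_vertex_inX w) => /(_ v); rewrite realize_vertex_coord. Qed.

Lemma subdivision_row1 w : \sum_v p w v = 1.
Proof.
case: (subdivision_vertex_inX w) => _ [<- _].
by apply: eq_bigr => v _; rewrite realize_vertex_coord.
Qed.

Lemma proper_subdivision_overlap t w1 w2 : proper_subdivision K Ks p ->
  t \in Ks -> w1 \in t -> w2 \in t -> exists v, 0 < p w1 v /\ 0 < p w2 v.
Proof.
move=> proper tKs w1t w2t.
pose s w := supp (realize p (vertex_coord R w)).
have vertex_bary w : bary (s w) (realize p (vertex_coord R w)) /\ s w \in K.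
  by case: (subdivision_vertex_inX w) => ? [? ?]; do 2!split=> //.
have [[bary1 s1K] [bary2 s2K]] := (vertex_bary w1, vertex_bary w2).
have : ~~ [disjoint s w1 & s w2].
  apply/negP => disj; apply: (proper _ _ _ tKs s1K s2K disj).
  by split; eexists; split; [apply: bary_vertex_coord w1t | | apply: bary_vertex_coord w2t |].
rewrite -setI_eq0 => /set0Pn [v]; rewrite !inE !realize_vertex_coord => /andP [p1 p2].
by exists v; rewrite !lt0r p1 p2 !subdivision_ge0.
Qed.

End Subdivision.

Section SimplicialMap.

Variables (V W : finType) (K : {set {set V}}) (Ks : {set {set W}}).
Variables (gam : W -> V) (t : {set W}).
Hypotheses (gam_nondeg : nondegenerate_map Ks gam) (tKs : t \in Ks).

Lemma nondegenerate_injective : {in t &, injective gam}.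
Proof. by apply/imset_injP; rewrite gam_nondeg. Qed.

Lemma card_pred_le_dimK : simplicial Ks K gam -> (#|t|.-1 <= dimK K)%N.
Proof.
move=> gam_simp; rewrite -gam_nondeg // /dimK -!subn1 leq_sub2r //.
exact: (@leq_bigmax_cond _ (mem K) (fun s => #|s|) _ (gam_simp _ tKs)).
Qed.

Lemma dK_gimage (R : numDomainType) (c1 c2 : W -> R) :
  supp c1 \subset t -> supp c2 \subset t ->
  dK (gimage gam c1) (gimage gam c2) = \sum_(w in t) `|c1 w - c2 w|.
Proof.
move=> c1t c2t.
have c_out w : w \notin t -> c1 w - c2 w = 0.
  by move=> wt; rewrite !(supp_sub_eq0 _ wt) ?subrr.
have gimageB v : gimage gam c1 v - gimage gam c2 v = \sum_(w | gam w == v) (c1 w - c2 w).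
  by rewrite sumrB.
rewrite /dK (bigID (mem (gam @: t))) /= [X in _ + X]big1 ?addr0 => [|v vt].
  rewrite big_imset /=; last exact: nondegenerate_injective.
  apply: eq_bigr => w wt; rewrite gimageB (bigD1 w) //= big1 ?addr0 //.
  move=> w' /andP [/eqP gw' w'w]; have [w't | /c_out //] := boolP (w' \in t).
  by move: w'w; rewrite (nondegenerate_injective w't wt gw') eqxx.
rewrite gimageB big1 ?normr0 // => w /eqP gw; apply: c_out.
by apply: contra vt => wt; rewrite -gw imset_f.
Qed.

End SimplicialMap.

Theorem proposition4p8 (R : realFieldType) (V W : finType)
  (K : {set {set V}}) (Ks : {set {set W}}) (p : W -> V -> R) (gam : W -> V) :
  is_subdivision K Ks p -> proper_subdivision K Ks p ->
  simplicial Ks K gam -> nondegenerate_map Ks gam ->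
  (0 < dimK K)%N ->
  forall t, t \in Ks ->
  forall y1 y2 : V -> R, bary (gam @: t) y1 -> bary (gam @: t) y2 ->
  forall c1 c2 : W -> R, bary t c1 -> bary t c2 ->
  gimage gam c1 =1 y1 -> gimage gam c2 =1 y2 ->
  dK (realize p c1) (realize p c2) <= (1 - theta p / (dimK K)%:R) * dK y1 y2.
Proof.
move=> subdiv proper simp nondeg dim_gt0 t tKs y1 y2 _ _ c1 c2
  [_ [c1_sum1 c1t]] [_ [c2_sum1 c2t]] gc1 gc2.
set x := fun w => c1 w - c2 w.
have x_out w : w \notin t -> x w = 0 by move=> wt; rewrite /x !(supp_sub_eq0 _ wt) ?subrr.
have x_sum0 : \sum_(w in t) x w = 0.
  by rewrite sumrB !sum_supp_sub // c1_sum1 c2_sum1 subrr.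
have t_ne : t != set0 by case: subdiv => [[_ [Ks_ne _]] _ _ _ _]; apply: Ks_ne.
have [wM [wm [wMt wmt S_le_M S_le_m]]] :=
  sum_normr_le_extremes t_ne x_sum0 (card_pred_le_dimK nondeg tKs simp).
have [v0 [pM_gt0 pm_gt0]] := proper_subdivision_overlap subdiv proper tKs wMt wmt.
have S_all : \sum_(w in t) `|x w| = \sum_w `|x w|.
  by apply: big_rmcond => w /x_out ->; rewrite normr0.
have dKy : dK y1 y2 = \sum_w `|x w|.
  by rewrite -S_all -(dK_gimage nondeg tKs c1t c2t); apply: eq_bigr => v _; rewrite gc1 gc2.
rewrite dK_realize dKy; rewrite S_all in S_le_M S_le_m.
apply: (l1_norm_mix_contract (subdivision_ge0 subdiv) (subdivision_row1 subdiv)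
  dim_gt0 (theta_gt0 p) (theta_le pM_gt0) (theta_le pm_gt0) S_le_M S_le_m).
Qed.
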